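(* Let $R$ be a complete discrete valuation ring of characteristic $p>0$ with uniformizer $\pi$, field of fractions $K$, and normalized valuation $v_K$. Let $H$ be a primitively generated $K$-Hopf algebra of rank $p^2$, $t_1,t_2$ a $K$-basis of $\mathrm{Prim}(H)$ with associated matrix $B$. Let \[\Theta=\begin{pmatrix}\pi^i&0\\ \theta&\pi^j\end{pmatrix},\qquad i,j\in\mathbb{Z},\ \theta\in K,\ v_K(\theta)\le j,\] satisfy $\Theta^{-1}B\Theta^{(p)}\in M_2(R)$. Then the Hopf order corresponding to $\Theta$ (the image in $H$ of the $R$-Hopf algebra $R[u_1,u_2]/(u_i^p-\sum_j a_{j,i}u_j)$, $u_i$ primitive, $(a_{j,i})=\Theta^{-1}B\Theta^{(p)}$, under $u_i\mapsto\sum_j\theta_{j,i}t_j$) is \[H_{i,j,\theta}=R[\pi^it_1+\theta t_2,\ \pi^jt_2]\subseteq H.\] Moreover, if $\theta'\in K$ with $v_K(\theta')\le j$ also satisfies that $\begin{pmatrix}\pi^i&0\\ \theta'&\pi^j\end{pmatrix}^{-1}B\begin{pmatrix}\pi^i&0\\ \theta'&\pi^j\end{pmatrix}^{(p)}\in M_2(R)$, then $H_{i,j,\theta}=H_{i,j,\theta'}$ if and only if $v_K(\theta-\theta')\ge j$.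
   Context: $\Theta^{(p)}$ denotes the matrix obtained by raising each entry of $\Theta=(\theta_{j,i})$ to the $p$-th power. $t$ is primitive if $\Delta(t)=t\otimes1+1\otimes t$; $\mathrm{Prim}(H)$ is the module of primitives; $H$ is primitively generated if generated as an algebra by its primitives. The associated matrix $B=(b_{j,i})$ is defined by $t_i^p=\sum_j b_{j,i}t_j$. An $R$-Hopf order in $H$ is a finitely generated projective $R$-submodule which is an $R$-Hopf algebra under the inherited operations and spans $H$ over $K$. *)

From HB Require Import structures.
From mathcomp Require Import all_boot all_order all_algebra.
From mathcomp Require Import all_field.
Set Implicit Arguments. Unset Strict Implicit. Unset Printing Implicit Defensive.
Import Order.TTheory GRing.Theory Num.Theory.
Local Open Scope ring_scope.

(* v : K -> int is the (normalized) valuation on K^x; its value at 0 is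
   irrelevant: v_K(0) = +oo is handled by the helpers vge / vle below.      *)
Definition discrete_valuation (K : fieldType) (v : K -> int) : Prop :=
  [/\ forall x y : K, x != 0 -> y != 0 -> v (x * y) = v x + v y,
      forall x y : K, x != 0 -> y != 0 -> x + y != 0 ->
        Order.min (v x) (v y) <= v (x + y)
    & exists x : K, x != 0 /\ v x = 1 ].

Definition vge (K : fieldType) (v : K -> int) (x : K) (n : int) : bool :=
  (x == 0) || (n <= v x).
Definition vle (K : fieldType) (v : K -> int) (x : K) (n : int) : bool :=
  (x != 0) && (v x <= n).

(* The valuation ring R = { x in K | v_K(x) >= 0 }; K is its fraction field. *)
Definition inR (K : fieldType) (v : K -> int) (x : K) : bool := vge v x 0.

Definition v_cauchy (K : fieldType) (v : K -> int) (a : nat -> K) : Prop :=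
  forall N : int, exists M : nat, forall m n : nat, (M <= m)%N -> (M <= n)%N ->
    vge v (a m - a n) N.
Definition v_converges (K : fieldType) (v : K -> int) (a : nat -> K) (l : K) : Prop :=
  forall N : int, exists M : nat, forall m : nat, (M <= m)%N -> vge v (a m - l) N.
Definition v_complete (K : fieldType) (v : K -> int) : Prop :=
  forall a : nat -> K, v_cauchy v a -> exists l : K, v_converges v a l.

Definition mx_inR (K : fieldType) (v : K -> int) (M : 'M[K]_2) : Prop :=
  forall a b : 'I_2, inR v (M a b).

Definition mx_frob (K : fieldType) (p : nat) (M : 'M[K]_2) : 'M[K]_2 :=
  map_mx (fun x => x ^+ p) M.

(* Theta = ( pi^i 0 ; theta pi^j ), rows indexed by j, columns by i, so that
   Theta j i = theta_{j,i}. *)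
Definition Theta_mx (K : fieldType) (pi : K) (i j : int) (theta : K) : 'M[K]_2 :=
  \matrix_(a < 2, b < 2)
    (if (a == 0) && (b == 0) then pi ^ i
     else if (a == 1) && (b == 0) then theta
     else if (a == 1) && (b == 1) then pi ^ j
     else 0).

(* T together with algebra maps i1, i2 : H -> T is H (x)_K H, with
   i1 x = x (x) 1 and i2 y = 1 (x) y: images commute and the products
   i1 e_a * i2 e_b (e a K-basis of H) form a K-basis of T. *)
Definition is_tensor_square (K : fieldType) (H T : falgType K)
    (i1 i2 : 'AHom(H, T)) : Prop :=
  (forall x y : H, i1 x * i2 y = i2 y * i1 x) /\
  basis_of fullv [seq i1 a * i2 b | a <- (vbasis {:H} : seq H),
                                    b <- (vbasis {:H} : seq H)].

Definition primitive (K : fieldType) (H T : falgType K)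
    (i1 i2 Delta : 'AHom(H, T)) (x : H) : Prop :=
  Delta x = i1 x + i2 x.

Definition Rgen (K : fieldType) (v : K -> int) (H : falgType K) (x y : H)
    (z : H) : Prop :=
  exists (n : nat) (c : 'I_n -> K) (a b : 'I_n -> nat),
    (forall k, inR v (c k)) /\ z = \sum_(k < n) c k *: (x ^+ a k * y ^+ b k).

(* The Hopf order corresponding to Theta: the image in H of
   R[u_1,u_2]/(u_i^p - sum_j a_{j,i} u_j) under u_i |-> sum_j theta_{j,i} t_j,
   i.e. the R-subalgebra generated by the images of u_1, u_2. *)
Definition hopf_order_of (K : fieldType) (v : K -> int) (H : falgType K)
    (t : 'I_2 -> H) (Th : 'M[K]_2) : H -> Prop :=
  Rgen v (\sum_(j < 2) Th j 0 *: t j) (\sum_(j < 2) Th j 1 *: t j).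

Definition H_ijtheta (K : fieldType) (v : K -> int) (H : falgType K)
    (t : 'I_2 -> H) (pi : K) (i j : int) (theta : K) : H -> Prop :=
  Rgen v (pi ^ i *: t 0 + theta *: t 1) (pi ^ j *: t 1).

From HB Require Import structures.
From mathcomp Require Import all_boot all_order all_algebra.
From mathcomp Require Import all_field zify.
Import Order.TTheory GRing.Theory Num.Theory.
Local Open Scope ring_scope.
Set Implicit Arguments. Unset Strict Implicit. Unset Printing Implicit Defensive.

(* Put x = pi^i t_1 + theta t_2 and y = pi^j t_2: these are the columns of
   Theta applied to (t_1, t_2), so the Hopf order of Theta is R[x, y].  As
   Theta^-1 B Theta^(p) is integral, x^p and y^p are R-linear combinations of
   x and y, hence R[x, y] is the R-span of the p^2 monomials x^a y^b with
   a, b < p.  These monomials also span H over K, so dim H = p^2 makes them a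
   K-basis and R[x, y] a free R-module on them.  Finally
   pi^i t_1 + theta' t_2 = x + ((theta' - theta) / pi^j) y lies in R[x, y]
   iff its coordinate on the basis monomial y is integral. *)

Section Valuation.
Variables (K : fieldType) (v : K -> int).
Hypothesis Hv : discrete_valuation v.

Lemma valuationM x y : x != 0 -> y != 0 -> v (x * y) = v x + v y.
Proof. by case: Hv => vM _ _; apply: vM. Qed.

Lemma valuation1 : v 1 = 0.
Proof.
have := valuationM (oner_neq0 K) (oner_neq0 K).
by rewrite mulr1 => /(congr1 (fun z => z - v 1)); rewrite subrr addrK.
Qed.

Lemma valuationV x : x != 0 -> v x^-1 = - v x.
Proof.
move=> x0; apply/eqP; rewrite -addr_eq0 addrC -valuationM ?invr_eq0 //.
by rewrite mulfV // valuation1.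
Qed.

Lemma valuationN x : x != 0 -> v (- x) = v x.
Proof.
move=> x0; have N1_neq0 : (-1 : K) != 0 by rewrite oppr_eq0 oner_neq0.
have vN1 : v (-1) = 0.
  have := valuationM N1_neq0 N1_neq0.
  rewrite mulrNN mulr1 valuation1 => /esym/eqP.
  by rewrite -mulr2n -mulr_natr mulf_eq0 => /orP[/eqP|].
by rewrite -mulN1r valuationM // vN1 add0r.
Qed.

Lemma valuation_expz pi (n : int) : pi != 0 -> v pi = 1 -> v (pi ^ n) = n.
Proof.
move=> pi0 vpi.
have vX m : v (pi ^+ m) = m%:Z.
  elim: m => [|m IHm]; first by rewrite expr0 valuation1.
  by rewrite exprS valuationM ?expf_neq0 // IHm vpi -addn1 PoszD addrC.
case: n => m; first exact: vX.
by rewrite /exprz valuationV ?expf_neq0 // vX NegzE.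
Qed.

Lemma inR0 : inR v 0.
Proof. by rewrite /inR /vge eqxx. Qed.

Lemma inR1 : inR v 1.
Proof. by rewrite /inR /vge valuation1 lexx orbT. Qed.

Lemma inRM a b : inR v a -> inR v b -> inR v (a * b).
Proof.
rewrite /inR /vge mulf_eq0.
have [//|a0] := eqVneq a 0; have [//|b0 /= va vb] := eqVneq b 0.
by rewrite valuationM // addr_ge0.
Qed.

Lemma inRD a b : inR v a -> inR v b -> inR v (a + b).
Proof.
rewrite /inR /vge.
have [->|a0] := eqVneq a 0; first by rewrite add0r.
have [->|b0] := eqVneq b 0; first by rewrite addr0 (negbTE a0).
have [//|ab0 /= va vb] := eqVneq (a + b) 0.
by case: Hv => _ vD _; apply: le_trans (vD _ _ a0 b0 ab0); rewrite le_min va vb.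
Qed.

Lemma vgeN d (n : int) : vge v (- d) n = vge v d n.
Proof. by rewrite /vge oppr_eq0; have [//|d0] := eqVneq d 0; rewrite valuationN. Qed.

Lemma vge_inR pi d (n : int) : pi != 0 -> v pi = 1 -> vge v d n = inR v (d / pi ^ n).
Proof.
move=> pi0 vpi; rewrite /inR /vge mulf_eq0 invr_eq0 expfz_eq0 (negbTE pi0) andbF orbF.
have [//|d0] := eqVneq d 0.
by rewrite valuationM ?invr_eq0 ?expfz_neq0 // valuationV ?expfz_neq0 //
  valuation_expz // subr_ge0.
Qed.

End Valuation.

Lemma sumr_deltaZ (K : fieldType) (V : lmodType K) n (i0 : 'I_n) (F : 'I_n -> V) :
  \sum_(k < n) (k == i0)%:R *: F k = F i0.
Proof.
rewrite (bigD1 i0) //= eqxx scale1r big1 ?addr0 // => k /negbTE ->.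
by rewrite scale0r.
Qed.

Lemma big_ord2 (R : Type) (idx : R) (op : Monoid.law idx) (F : 'I_2 -> R) :
  \big[op/idx]_(k < 2) F k = op (F 0) (F 1).
Proof. by rewrite big_ord_recr big_ord1 /=; congr (op (F _) (F _)); apply/val_inj. Qed.

Section RSpan.
Variables (K : fieldType) (v : K -> int).
Hypothesis Hv : discrete_valuation v.
Variables (A : falgType K) (s : seq A).

Definition Rspan (z : A) : Prop := exists d : 'I_(size s) -> K,
  (forall k, inR v (d k)) /\ z = \sum_(k < size s) d k *: s`_k.

Lemma Rspan0 : Rspan 0.
Proof.
exists (fun _ => 0); split=> [k|]; first exact: inR0.
by rewrite big1 // => k _; rewrite scale0r.
Qed.

Lemma RspanD z w : Rspan z -> Rspan w -> Rspan (z + w).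
Proof.
move=> [d [vd ->]] [e [ve ->]]; exists (fun k => d k + e k); split.
  by move=> k; apply: inRD.
by rewrite -big_split; apply: eq_bigr => k _; rewrite scalerDl.
Qed.

Lemma RspanZ r z : inR v r -> Rspan z -> Rspan (r *: z).
Proof.
move=> vr [d [vd ->]]; exists (fun k => r * d k); split.
  by move=> k; apply: inRM.
by rewrite scaler_sumr; apply: eq_bigr => k _; rewrite scalerA.
Qed.

Lemma Rspan_sum n (F : 'I_n -> A) : (forall k, Rspan (F k)) -> Rspan (\sum_(k < n) F k).
Proof.
elim: n F => [|n IHn] F RF; first by rewrite big_ord0; exact: Rspan0.
by rewrite big_ord_recr; apply: RspanD; [apply: IHn | apply: RF].
Qed.

Lemma Rspan_nth (k : 'I_(size s)) : Rspan s`_k.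
Proof.
exists (fun l => (l == k)%:R); split; last by rewrite sumr_deltaZ.
by move=> l; case: (l == k); [exact: inR1 | exact: inR0].
Qed.

Lemma Rspan_memv z : Rspan z -> z \in <<s>>%VS.
Proof.
move=> [d [_ ->]]; apply: memv_suml => k _; apply: memvZ.
exact/memv_span/mem_nth.
Qed.

Section LeftMultiplication.
Variable u : A.
Hypothesis Rspan_mul_nth : forall k : 'I_(size s), Rspan (u * s`_k).

Lemma Rspan_mull z : Rspan z -> Rspan (u * z).
Proof.
move=> [d [vd ->]]; rewrite mulr_sumr; apply: Rspan_sum => k.
by rewrite -scalerAr; apply: RspanZ.
Qed.

Lemma memv_span_mull z : z \in <<s>>%VS -> u * z \in <<s>>%VS.
Proof.
move=> /(coord_span (X := in_tuple s)) ->; rewrite mulr_sumr.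
apply: memv_suml => k _; rewrite -scalerAr; apply/memvZ/Rspan_memv.
exact: Rspan_mul_nth.
Qed.

End LeftMultiplication.

Lemma free_Rspan_coord (c : 'I_(size s) -> K) :
  free s -> Rspan (\sum_(k < size s) c k *: s`_k) -> forall k, inR v (c k).
Proof.
move=> free_s [d [vd ecd]] k.
have /(_ (fun l => c l - d l)) := elimT (@freeP _ _ _ (in_tuple s)) free_s.
under eq_bigr do rewrite scalerBl.
rewrite sumrB /= ecd subrr => /(_ erefl k)/eqP; rewrite subr_eq0 => /eqP ->.
exact: vd.
Qed.

End RSpan.

Section RGen.
Variables (K : fieldType) (v : K -> int).
Hypothesis Hv : discrete_valuation v.
Variable H : falgType K.
Hypothesis Hcomm : forall x y : H, x * y = y * x.
Implicit Types x y z w : H.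

Lemma Rgen_mono x y a b : Rgen v x y (x ^+ a * y ^+ b).
Proof.
exists 1%N, (fun _ => 1), (fun _ => a), (fun _ => b); split=> [k|].
  exact: inR1.
by rewrite big_ord1 scale1r.
Qed.

Lemma Rgen_x x y : Rgen v x y x.
Proof. by have := Rgen_mono x y 1 0; rewrite expr1 expr0 mulr1. Qed.

Lemma Rgen_y x y : Rgen v x y y.
Proof. by have := Rgen_mono x y 0 1; rewrite expr1 expr0 mul1r. Qed.

Lemma Rgen0 x y : Rgen v x y 0.
Proof.
exists 0%N, (fun _ => 0), (fun _ => 0%N), (fun _ => 0%N); split=> [k|].
  exact: inR0.
by rewrite big_ord0.
Qed.

Lemma RgenD x y z w : Rgen v x y z -> Rgen v x y w -> Rgen v x y (z + w).
Proof.
move=> [n [c [a [b [vc ->]]]]] [m [d [e [f [vd ->]]]]].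
pose glue T (g : 'I_n -> T) (h : 'I_m -> T) k :=
  match split k with inl k1 => g k1 | inr k2 => h k2 end.
exists (n + m)%N, (glue _ c d), (glue _ a e), (glue _ b f); split.
  by move=> k; rewrite /glue; case: split.
rewrite big_split_ord; congr (_ + _); apply: eq_bigr => k _.
  by rewrite /glue -[lshift _ _]/(unsplit (inl _ k)) unsplitK.
by rewrite /glue -[rshift _ _]/(unsplit (inr _ k)) unsplitK.
Qed.

Lemma RgenZ x y r z : inR v r -> Rgen v x y z -> Rgen v x y (r *: z).
Proof.
move=> vr [n [c [a [b [vc ->]]]]]; exists n, (fun k => r * c k), a, b; split.
  by move=> k; apply: inRM.
by rewrite scaler_sumr; apply: eq_bigr => k _; rewrite scalerA.
Qed.

Lemma Rgen_sum x y n (F : 'I_n -> H) :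
  (forall k, Rgen v x y (F k)) -> Rgen v x y (\sum_(k < n) F k).
Proof.
elim: n F => [|n IHn] F RF; first by rewrite big_ord0; exact: Rgen0.
by rewrite big_ord_recr; apply: RgenD; [apply: IHn | apply: RF].
Qed.

Lemma RgenM x y z w : Rgen v x y z -> Rgen v x y w -> Rgen v x y (z * w).
Proof.
move=> [n [c [a [b [vc ->]]]]] [m [d [e [f [vd ->]]]]].
rewrite mulr_suml; apply: Rgen_sum => k; rewrite mulr_sumr; apply: Rgen_sum => l.
rewrite -scalerAl -scalerAr; apply: RgenZ => //; apply: RgenZ => //.
have -> : x ^+ a k * y ^+ b k * (x ^+ e l * y ^+ f l) =
          x ^+ (a k + e l) * y ^+ (b k + f l).
  by rewrite !exprD -!mulrA; congr (_ * _); rewrite mulrA [y ^+ _ * _]Hcomm -mulrA.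
exact: Rgen_mono.
Qed.

Lemma RgenX x y z n : Rgen v x y z -> Rgen v x y (z ^+ n).
Proof.
move=> Rz; elim: n => [|n IHn]; last by rewrite exprS; apply: RgenM.
by have := Rgen_mono x y 0 0; rewrite !expr0 mulr1.
Qed.

Lemma Rgen_trans x y x' y' z :
  Rgen v x y x' -> Rgen v x y y' -> Rgen v x' y' z -> Rgen v x y z.
Proof.
move=> Rx' Ry' [n [c [a [b [vc ->]]]]]; apply: Rgen_sum => k.
by apply: RgenZ => //; apply: RgenM; apply: RgenX.
Qed.

Lemma Rgen_shift x y c z : inR v c -> Rgen v (x + c *: y) y z -> Rgen v x y z.
Proof.
move=> vc; apply: Rgen_trans; last exact: Rgen_y.
by apply: RgenD; [exact: Rgen_x | apply: RgenZ => //; exact: Rgen_y].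
Qed.

End RGen.

Section ReducedMonomials.
Variables (K : fieldType) (v : K -> int).
Hypothesis Hv : discrete_valuation v.
Variable H : falgType K.
Hypothesis Hcomm : forall x y : H, x * y = y * x.
Variables (p : nat) (x y : H) (M : 'M[K]_2).
Hypothesis p_gt1 : (1 < p)%N.
Hypothesis M_inR : mx_inR v M.
Hypotheses (xp : x ^+ p = M 0 0 *: x + M 1 0 *: y)
           (yp : y ^+ p = M 0 1 *: x + M 1 1 *: y).

Definition redmono := [seq x ^+ (k %/ p) * y ^+ (k %% p) | k <- iota 0 (p * p)].

Local Notation RS := (Rspan v redmono).

Lemma size_redmono : size redmono = (p * p)%N.
Proof. by rewrite size_map size_iota. Qed.

Lemma nth_redmono k : (k < p * p)%N -> redmono`_k = x ^+ (k %/ p) * y ^+ (k %% p).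
Proof. by move=> lt_k; rewrite (nth_map 0%N) ?size_iota // nth_iota. Qed.

Lemma redmonoP (k : 'I_(size redmono)) :
  exists a b, [/\ (a < p)%N, (b < p)%N & redmono`_k = x ^+ a * y ^+ b].
Proof.
have lt_k : (k < p * p)%N by rewrite -size_redmono.
exists (k %/ p)%N, (k %% p)%N; split; last exact: nth_redmono.
  by rewrite ltn_divLR // ltnW.
by rewrite ltn_mod ltnW.
Qed.

Lemma Rspan_mono a b : (a < p)%N -> (b < p)%N -> RS (x ^+ a * y ^+ b).
Proof.
move=> lt_a lt_b; have lt_k : (a * p + b < size redmono)%N.
  by rewrite size_redmono; nia.
have := Rspan_nth Hv (Ordinal lt_k); rewrite /= nth_redmono -?size_redmono //.
by rewrite divnMDl ?modnMDl ?divn_small ?modn_small ?addn0 // ltnW.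
Qed.

Lemma Rspan_x : RS x.
Proof. by have := Rspan_mono p_gt1 (ltnW p_gt1); rewrite expr1 expr0 mulr1. Qed.

Lemma Rspan_y : RS y.
Proof. by have := Rspan_mono (ltnW p_gt1) p_gt1; rewrite expr1 expr0 mul1r. Qed.

Lemma Rspan_xX a : (a <= p)%N -> RS (x ^+ a).
Proof.
case: (ltngtP a p) => // [lt_a _ | -> _].
  by have := Rspan_mono lt_a (ltnW p_gt1); rewrite expr0 mulr1.
by rewrite xp; apply: (RspanD Hv); apply: (RspanZ Hv (M_inR _ _));
  [exact: Rspan_x | exact: Rspan_y].
Qed.

Lemma Rspan_yX b : (b <= p)%N -> RS (y ^+ b).
Proof.
case: (ltngtP b p) => // [lt_b _ | -> _].
  by have := Rspan_mono (ltnW p_gt1) lt_b; rewrite expr0 mul1r.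
by rewrite yp; apply: (RspanD Hv); apply: (RspanZ Hv (M_inR _ _));
  [exact: Rspan_x | exact: Rspan_y].
Qed.

Lemma Rspan_monoSx a b : (a < p)%N -> (b < p)%N -> RS (x ^+ a.+1 * y ^+ b).
Proof.
move=> lt_a lt_b; case: (ltnP a.+1 p) => [lt_Sa|le_pa]; first exact: Rspan_mono.
have -> : a.+1 = p by lia.
rewrite xp mulrDl -!scalerAl -exprS; apply: (RspanD Hv); apply: (RspanZ Hv (M_inR _ _)).
  by have := Rspan_mono p_gt1 lt_b; rewrite expr1.
exact: Rspan_yX.
Qed.

Lemma Rspan_monoSy a b : (a < p)%N -> (b < p)%N -> RS (x ^+ a * y ^+ b.+1).
Proof.
move=> lt_a lt_b; case: (ltnP b.+1 p) => [lt_Sb|le_pb]; first exact: Rspan_mono.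
have -> : b.+1 = p by lia.
rewrite yp mulrDr -!scalerAr -exprSr; apply: (RspanD Hv); apply: (RspanZ Hv (M_inR _ _)).
  exact: Rspan_xX.
by have := Rspan_mono lt_a p_gt1; rewrite expr1.
Qed.

Lemma Rspan_mulx_nth (k : 'I_(size redmono)) : RS (x * redmono`_k).
Proof.
by have [a [b [lt_a lt_b ->]]] := redmonoP k; rewrite mulrA -exprS; exact: Rspan_monoSx.
Qed.

Lemma Rspan_muly_nth (k : 'I_(size redmono)) : RS (y * redmono`_k).
Proof.
have [a [b [lt_a lt_b ->]]] := redmonoP k.
by rewrite Hcomm -mulrA -exprSr; exact: Rspan_monoSy.
Qed.

Lemma Rgen_Rspan z : Rgen v x y z -> RS z.
Proof.
have Rmono a b : RS (x ^+ a * y ^+ b).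
  elim: a => [|a IHa].
    elim: b => [|b IHb]; first by apply: Rspan_mono; rewrite ltnW.
    rewrite expr0 mul1r exprS; apply: (Rspan_mull Hv Rspan_muly_nth).
    by rewrite -[y ^+ b]mul1r.
  by rewrite exprS -mulrA; apply: (Rspan_mull Hv Rspan_mulx_nth).
move=> [n [c [a [b [vc ->]]]]]; apply: (Rspan_sum Hv) => k.
exact: (RspanZ Hv).
Qed.

Lemma agenv_redmono : (agenv <<[:: x; y]>> <= <<redmono>>)%VS.
Proof.
apply: agenv_sub_modl.
  have := Rspan_memv (Rspan_mono (ltnW p_gt1) (ltnW p_gt1)).
  by rewrite !expr0 mulr1.
apply/prodvP => u w; rewrite span_cons span_seq1 => /memv_addP[_ /vlineP[c ->]].
move=> [_ /vlineP[d ->] ->] Sw; rewrite mulrDl -!scalerAl.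
by apply: memvD; apply: memvZ;
  [exact: (memv_span_mull Rspan_mulx_nth) | exact: (memv_span_mull Rspan_muly_nth)].
Qed.

Lemma free_redmono :
  \dim {:H} = (p ^ 2)%N -> agenv <<[:: x; y]>>%VS = fullv -> free redmono.
Proof.
move=> dimH genH; rewrite /free eqn_leq dim_span size_redmono mulnn -dimH.
by apply: dimvS; rewrite -genH agenv_redmono.
Qed.

Lemma Rgen_shift_inR c : free redmono -> Rgen v x y (x + c *: y) -> inR v c.
Proof.
move=> free_mono /Rgen_Rspan.
have lt_ix : (p < size redmono)%N by rewrite size_redmono; nia.
have lt_iy : (1 < size redmono)%N by rewrite size_redmono; nia.
pose ix := Ordinal lt_ix; pose iy := Ordinal lt_iy.
have ix_x : redmono`_ix = x.
  by rewrite nth_redmono -?size_redmono // divnn modnn ltnW // expr1 expr0 mulr1.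
have iy_y : redmono`_iy = y.
  by rewrite nth_redmono -?size_redmono // divn_small // modn_small // expr0 expr1 mul1r.
have -> : x + c *: y = \sum_(k < size redmono)
    ((k == ix)%:R + c * (k == iy)%:R) *: redmono`_k.
  under eq_bigr do rewrite scalerDl -scalerA.
  by rewrite big_split /= -scaler_sumr !sumr_deltaZ ix_x iy_y.
move=> /(free_Rspan_coord free_mono)/(_ iy).
have -> : (iy == ix) = false by apply/eqP => /(congr1 val) /=; lia.
by rewrite eqxx add0r mulr1.
Qed.

End ReducedMonomials.

Section FrobeniusChangeOfBasis.
Variables (K : fieldType) (H : falgType K) (p : nat).
Hypothesis Hchar : p \in [pchar K].
Hypothesis Hcomm : forall x y : H, x * y = y * x.

Lemma frobenius_sum n (F : 'I_n -> H) : (\sum_(l < n) F l) ^+ p = \sum_(l < n) F l ^+ p.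
Proof.
have charH : p \in [pchar H] by rewrite pchar_lalg.
elim: n F => [|n IHn] F; rewrite -!(pFrobenius_autE charH).
  by rewrite !big_ord0 pFrobenius_aut0.
rewrite !big_ord_recr pFrobenius_autD_comm; last exact: Hcomm.
by rewrite !(pFrobenius_autE charH) IHn.
Qed.

Lemma frobenius_change_basis (t : 'I_2 -> H) (B Th : 'M[K]_2) :
  (forall k, t k ^+ p = \sum_(l < 2) B l k *: t l) -> Th \in unitmx ->
  forall k, (\sum_(l < 2) Th l k *: t l) ^+ p =
    \sum_(m < 2) (invmx Th *m B *m mx_frob p Th) m k *: \sum_(l < 2) Th l m *: t l.
Proof.
move=> tp unit_Th k.
have ThM : Th *m (invmx Th *m B *m mx_frob p Th) = B *m mx_frob p Th.
  by rewrite -mulmxA mulKVmx.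
transitivity (\sum_(m < 2) (B *m mx_frob p Th) m k *: t m).
  rewrite frobenius_sum; under eq_bigr do rewrite exprZn tp scaler_sumr.
  rewrite exchange_big; apply: eq_bigr => m _; rewrite mxE scaler_suml.
  by apply: eq_bigr => l _; rewrite scalerA mxE mulrC.
rewrite -ThM; under [RHS]eq_bigr do rewrite scaler_sumr.
rewrite [RHS]exchange_big; apply: eq_bigr => l _; rewrite mxE scaler_suml.
by apply: eq_bigr => m _; rewrite scalerA mulrC.
Qed.

End FrobeniusChangeOfBasis.

Lemma ThetaE (K : fieldType) (pi : K) i j theta :
  [/\ Theta_mx pi i j theta 0 0 = pi ^ i, Theta_mx pi i j theta 1 0 = theta,
      Theta_mx pi i j theta 0 1 = 0 & Theta_mx pi i j theta 1 1 = pi ^ j].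
Proof. by split; rewrite mxE. Qed.

Lemma Theta_unitmx (K : fieldType) (pi : K) i j theta :
  pi != 0 -> Theta_mx pi i j theta \in unitmx.
Proof.
move=> pi0; have [Th00 _ Th01 Th11] := ThetaE pi i j theta.
rewrite unitmxE det_trig.
  by rewrite big_ord2 Th00 Th11 unitfE mulf_neq0 // expfz_neq0.
apply/is_trig_mxP => a b.
by case: a => [[|[|a]] lt_a] //; case: b => [[|[|b]] lt_b] //= _; rewrite mxE.
Qed.

Lemma Theta_cols (K : fieldType) (V : lmodType K) (pi : K) i j theta (t : 'I_2 -> V) :
  \sum_(l < 2) Theta_mx pi i j theta l 0 *: t l = pi ^ i *: t 0 + theta *: t 1 /\
  \sum_(l < 2) Theta_mx pi i j theta l 1 *: t l = pi ^ j *: t 1.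
Proof.
have [Th00 Th10 Th01 Th11] := ThetaE pi i j theta.
by rewrite !big_ord2 /= Th00 Th10 Th01 Th11 scale0r add0r.
Qed.

Lemma hopf_order_Theta (K : fieldType) (v : K -> int) (H : falgType K)
    (t : 'I_2 -> H) pi i j theta :
  hopf_order_of v t (Theta_mx pi i j theta) = H_ijtheta v t pi i j theta.
Proof.
by have [col0 col1] := Theta_cols pi i j theta t; rewrite /hopf_order_of col0 col1.
Qed.

Lemma span_sub_trig2 (K : fieldType) (V : vectType K) (a b c : K) (u w : V) :
  a != 0 -> c != 0 -> (<<[:: u; w]>> <= <<[:: (a *: u + b *: w)%R; c *: w]>>)%VS.
Proof.
move=> a0 c0; set S := <<[:: _; c *: w]>>%VS.
have uw_in : a *: u + b *: w \in S by apply: memv_span; rewrite !inE eqxx.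
have cw_in : c *: w \in S by apply: memv_span; rewrite !inE eqxx orbT.
have w_in : w \in S by have := memvZ c^-1 cw_in; rewrite scalerK.
have u_in : u \in S.
  by have := memvZ a^-1 (memvB uw_in (memvZ b w_in)); rewrite addrK scalerK.
by rewrite span_cons span_seq1 subv_add -!memvE u_in w_in.
Qed.

Lemma lincomb2_shift (K : fieldType) (V : lmodType K) (a b b' c : K) (u w : V) :
  c != 0 -> a *: u + b *: w = a *: u + b' *: w + ((b - b') / c) *: (c *: w).
Proof. by move=> c0; rewrite scalerA divfK // -addrA -scalerDl [b' + _]addrC subrK. Qed.

Lemma H_ijtheta_shift (K : fieldType) (v : K -> int) (H : falgType K)
    (t : 'I_2 -> H) pi i j theta theta' z :
  discrete_valuation v -> (forall x y : H, x * y = y * x) -> pi != 0 -> v pi = 1 ->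
  vge v (theta - theta') j ->
  H_ijtheta v t pi i j theta z -> H_ijtheta v t pi i j theta' z.
Proof.
move=> Hv Hcomm pi0 vpi vge_d Hz.
apply: (Rgen_shift Hv Hcomm (c := (theta - theta') / pi ^ j)); first by rewrite -vge_inR.
by rewrite -lincomb2_shift ?expfz_neq0.
Qed.

Unset Implicit Arguments.

Theorem corollary6p5
  (p : nat) (K : fieldType) (v : K -> int)
  (Hv : discrete_valuation v) (Hcompl : v_complete v)
  (Hchar : p \in [pchar K])
  (pi : K) (Hpi0 : pi != 0) (Hpi : v pi = 1)
  (H : falgType K) (Hcomm : forall x y : H, x * y = y * x)
  (T : falgType K) (i1 i2 Delta : 'AHom(H, T))
  (Hten : is_tensor_square i1 i2)
  (t : 'I_2 -> H)
  (Htprim : forall k, primitive i1 i2 Delta (t k))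
  (Htfree : free [:: t 0; t 1])
  (HPrim : forall x : H, primitive i1 i2 Delta x -> x \in <<[:: t 0%R; t 1%R]>>%VS)
  (Hgen : agenv <<[:: t 0%R; t 1%R]>>%VS = fullv)
  (Hrank : \dim {:H} = (p ^ 2)%N)
  (B : 'M[K]_2) (HB : forall k : 'I_2, t k ^+ p = \sum_(l < 2) B l k *: t l)
  (i j : int) (theta : K) (Htheta : vle v theta j)
  (HTh : mx_inR v (invmx (Theta_mx pi i j theta) *m B
                    *m mx_frob p (Theta_mx pi i j theta))) :
  (forall z : H, hopf_order_of v t (Theta_mx pi i j theta) z
                 <-> H_ijtheta v t pi i j theta z)
  /\
  (forall theta' : K, vle v theta' j ->
     mx_inR v (invmx (Theta_mx pi i j theta') *m B
               *m mx_frob p (Theta_mx pi i j theta')) ->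
     ((forall z : H, H_ijtheta v t pi i j theta z <-> H_ijtheta v t pi i j theta' z)
      <-> vge v (theta - theta') j)).
Proof.
have p_gt1 : (1 < p)%N := prime_gt1 (pcharf_prime Hchar).
split=> [z | theta' _ _]; first by rewrite hopf_order_Theta.
have [col0 col1] := Theta_cols pi i j theta t.
set x := pi ^ i *: t 0 + theta *: t 1 in col0 *; set y := pi ^ j *: t 1 in col1 *.
set M := invmx _ *m B *m _ in HTh.
have unit_Th := Theta_unitmx i j theta Hpi0.
have xp : x ^+ p = M 0 0 *: x + M 1 0 *: y.
  rewrite -{1}col0 (frobenius_change_basis Hchar Hcomm HB unit_Th).
  by rewrite big_ord2 /= col0 col1.
have yp : y ^+ p = M 0 1 *: x + M 1 1 *: y.
  rewrite -{1}col1 (frobenius_change_basis Hchar Hcomm HB unit_Th).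
  by rewrite big_ord2 /= col0 col1.
have genH : agenv <<[:: x; y]>>%VS = fullv.
  by apply/eqP; rewrite eqEsubv subvf -Hgen agenvS // span_sub_trig2 // expfz_neq0.
have free_mono := free_redmono Hv Hcomm p_gt1 HTh xp yp Hrank genH.
split=> [eq_orders | vge_diff z]; last first.
  by split; apply: H_ijtheta_shift; rewrite // -opprB vgeN.
have : Rgen v x y (x + ((theta' - theta) / pi ^ j) *: y).
  by rewrite /y -lincomb2_shift ?expfz_neq0 //; apply/eq_orders/Rgen_x.
move/(Rgen_shift_inR Hv Hcomm p_gt1 HTh xp yp free_mono).
by rewrite -vge_inR // -opprB vgeN.
Qed.
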